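(* Let $k$ be an algebraically closed field of characteristic $0$. Every curve in a nonempty Zariski open subset of the moduli space of genus-$2$ curves over $k$ is isomorphic to a curve of the form $y^2=(x-v)(vx-1)(x^2-a_1)(x^2-a_2)$ with $a_1,a_2,v\in k$. Equivalently, for six points $P_1,\ldots,P_6$ of $\mathbf{P}^1(k)$ in general position, there is a coordinate $x$ on $\mathbf{P}^1$ in which the set $\{P_1,\ldots,P_6\}$ equals $\{x_1,-x_1,x_2,-x_2,v,1/v\}$ for some $x_1,x_2,v\in k$. *)

From HB Require Import structures.
From mathcomp Require Import all_boot all_order all_algebra.
Set Implicit Arguments. Unset Strict Implicit. Unset Printing Implicit Defensive.
Import Order.TTheory GRing.Theory.
Local Open Scope ring_scope.

Inductive pexpr (R : Type) (n : nat) : Type :=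
| PX : 'I_n -> pexpr R n
| PC : R -> pexpr R n
| PAdd : pexpr R n -> pexpr R n -> pexpr R n
| PMul : pexpr R n -> pexpr R n -> pexpr R n.

Fixpoint peval (R : pzRingType) (n : nat) (e : pexpr R n) (x : 'I_n -> R) : R :=
  match e with
  | PX i => x i
  | PC c => c
  | PAdd e1 e2 => peval e1 x + peval e2 x
  | PMul e1 e2 => peval e1 x * peval e2 x
  end.

(* P holds on a nonempty Zariski open subset of k^n: there is a polynomial f,
   not identically zero, such that P holds wherever f does not vanish.
   (Every nonempty Zariski open set contains a nonempty basic open D(f).) *)
Definition generic (R : pzRingType) (n : nat) (P : ('I_n -> R) -> Prop) : Prop :=
  exists f : pexpr R n,
    (exists x, peval f x != 0) /\ (forall x, peval f x != 0 -> P x).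

Definition moebius (F : fieldType) (a b c d : F) (x : F) : F := (a * x + b) / (c * x + d).

From HB Require Import structures.
From mathcomp Require Import all_boot all_order all_algebra ring.
Import GRing.Theory.
Local Open Scope ring_scope.

(* Given four points p0, p1, p2, p3 of the line, there is a unique
   involution sigma(x) = (a x + b) / (c x - a) exchanging p0 <-> p1 and
   p2 <-> p3; its coefficients a, b, c are explicit polynomials in the p_i.
   When c != 0 and the discriminant a^2 + b c is nonzero, sigma has two
   distinct fixed points (a +- r) / c with r^2 = a^2 + b c, and the Moebius map
     N(q) = l (c q - a - r) / (c q - a + r)
   sending them to 0 and infinity conjugates sigma to z |-> -z, for every
   scale l.  Hence N(p1) = - N(p0) and N(p3) = - N(p2).  Over an algebraically
   closed field we can finally choose l with l^2 = (w4 w5) / (u4 u5), where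
   u_i = c p_i - a - r and w_i = c p_i - a + r, so that N(p5) = 1 / N(p4).  This works as soon as the "degeneracy" polynomial
     c * (a^2 + b c) * prod_i ((c p_i - a)^2 - (a^2 + b c))
   does not vanish; in characteristic 0 it is not identically zero, as its
   value at the integer point (0, 1, ..., 5) shows. *)

Lemma pchar0_intr_eq0 (F : fieldType) :
  [pchar F] =i pred0 -> forall z : int, (z%:~R == 0 :> F) = (z == 0).
Proof.
move=> /pcharf0P natr_eq0 [] n; first by rewrite -pmulrn natr_eq0.
by rewrite NegzE intrN oppr_eq0 -pmulrn natr_eq0.
Qed.

Lemma closed_field_sqrt {F : closedFieldType} (x : F) : exists r : F, r ^+ 2 = x.
Proof.
have [r Hr] := @solve_monicpoly F 2 (fun i => if i == 0%N then x else 0) isT.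
by exists r; rewrite Hr big_ord_recr big_ord1 /= expr0 mulr1 mul0r addr0.
Qed.

Lemma sqr_scale_neq0 {F : idomainType} {l x y : F} :
  l ^+ 2 * x = y -> y != 0 -> (l != 0) && (x != 0).
Proof. by move=> <-; rewrite mulf_eq0 expf_eq0 /= negb_or. Qed.

Lemma scaled_inverse_pair (F : fieldType) (l u4 w4 u5 w5 : F) :
  l ^+ 2 * (u4 * u5) = w4 * w5 -> w4 != 0 -> w5 != 0 ->
  l * u5 / w5 = (l * u4 / w4)^-1.
Proof.
move=> hl hw4 hw5; have /andP[hl0] := sqr_scale_neq0 hl (mulf_neq0 hw4 hw5).
rewrite mulf_eq0 negb_or => /andP[hu4 hu5].
rewrite invf_div; apply/eqP; rewrite eqr_div ?mulf_neq0 //.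
by apply/eqP; rewrite -hl; ring.
Qed.

Section Normalizer.
(* The involution x |-> (a x + b) / (c x - a) has fixed points (a +- r) / c,
   where r is a square root of its discriminant a^2 + b c. *)
Variables (F : fieldType) (a b c r l : F).
Hypothesis r_sqrt : r ^+ 2 = a ^+ 2 + b * c.

(* The Moebius map sending the fixed points to 0 and infinity, scaled by l. *)
Definition normalizer (q : F) : F := l * (c * q - a - r) / (c * q - a + r).

Lemma normalizer_moebius (q : F) :
  normalizer q = moebius (l * c) (- (l * (a + r))) c (r - a) q.
Proof. by rewrite /normalizer /moebius; congr (_ / _); ring. Qed.

Lemma normalizer_opposite (x y : F) :
  c * x * y - a * (x + y) - b = 0 ->
  c * x - a + r != 0 -> c * y - a + r != 0 ->
  normalizer y = - normalizer x.
Proof.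
move=> swap_xy hx hy; rewrite /normalizer -mulNr; apply/eqP.
rewrite eqr_div // -subr_eq0.
have -> : l * (c * y - a - r) * (c * x - a + r) - - (l * (c * x - a - r)) * (c * y - a + r)
    = 2 * l * (c * (c * x * y - a * (x + y) - b) + (a ^+ 2 + b * c - r ^+ 2)) by ring.
by rewrite swap_xy r_sqrt subrr mulr0 add0r mulr0.
Qed.

(* Numerator and denominator of N(q) multiply to the fixed-point quadratic,
   so both are nonzero when q is not a fixed point. *)
Lemma fixed_point_factors (q : F) :
  (c * q - a - r) * (c * q - a + r) = (c * q - a) ^+ 2 - (a ^+ 2 + b * c).
Proof. by rewrite -r_sqrt; ring. Qed.

End Normalizer.
Arguments normalizer {F}.
Arguments normalizer_opposite {F a b c r} l.
Arguments fixed_point_factors {F a b c r}.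

Section InvolutionOfFourPoints.
(* Coefficients of the involution exchanging p0 <-> p1 and p2 <-> p3. *)
Variables (R : comPzRingType) (p0 p1 p2 p3 : R).

Definition invol_a : R := p0 * p1 - p2 * p3.
Definition invol_b : R := p2 * p3 * (p0 + p1) - p0 * p1 * (p2 + p3).
Definition invol_c : R := p0 + p1 - (p2 + p3).
Definition invol_disc : R := invol_a ^+ 2 + invol_b * invol_c.

(* Up to the factor c, the quadratic whose roots are the fixed points. *)
Definition fixed_form (q : R) : R := (invol_c * q - invol_a) ^+ 2 - invol_disc.

(* x |-> (a x + b) / (c x - a) indeed exchanges the points of each pair. *)
Lemma invol_swaps01 : invol_c * p0 * p1 - invol_a * (p0 + p1) - invol_b = 0.
Proof. rewrite /invol_a /invol_b /invol_c; ring. Qed.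

Lemma invol_swaps23 : invol_c * p2 * p3 - invol_a * (p2 + p3) - invol_b = 0.
Proof. rewrite /invol_a /invol_b /invol_c; ring. Qed.

End InvolutionOfFourPoints.
Arguments invol_a {R}. Arguments invol_b {R}. Arguments invol_c {R}.
Arguments invol_disc {R}. Arguments fixed_form {R}.

Local Notation ord6 j := (@Ordinal 6 j isT).

Section SixPoints.
Variable R : comPzRingType.
Implicit Type P : 'I_6 -> R.

Definition inv_a P := invol_a (P (ord6 0)) (P (ord6 1)) (P (ord6 2)) (P (ord6 3)).
Definition inv_b P := invol_b (P (ord6 0)) (P (ord6 1)) (P (ord6 2)) (P (ord6 3)).
Definition inv_c P := invol_c (P (ord6 0)) (P (ord6 1)) (P (ord6 2)) (P (ord6 3)).
Definition inv_disc P := invol_disc (P (ord6 0)) (P (ord6 1)) (P (ord6 2)) (P (ord6 3)).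

(* The degeneracy function: its nonvanishing means that the involution has
   two distinct fixed points, none of which is one of the six points. *)
Definition degeneracy P : R :=
  inv_c P * inv_disc P * \prod_i fixed_form (P (ord6 0)) (P (ord6 1)) (P (ord6 2)) (P (ord6 3)) (P i).

End SixPoints.
Arguments inv_a {R}. Arguments inv_b {R}. Arguments inv_c {R}.
Arguments inv_disc {R}. Arguments degeneracy {R}.

(* The degeneracy has integer coefficients, so it commutes with ring morphisms. *)
Lemma degeneracy_rmorph {R S : comPzRingType} (f : {rmorphism R -> S}) (P : 'I_6 -> R) :
  f (degeneracy P) = degeneracy (f \o P).
Proof.
rewrite /degeneracy /inv_c /inv_disc /fixed_form /invol_disc /invol_a /invol_b /invol_c.
rewrite !rmorphM rmorph_prod !(rmorphB, rmorphD, rmorphM, rmorphXn).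
by under eq_bigr do rewrite !(rmorphB, rmorphD, rmorphM, rmorphXn).
Qed.

Lemma enum_ord6 :
  enum 'I_6 = [:: ord6 0; ord6 1; ord6 2; ord6 3; ord6 4; ord6 5].
Proof. by apply: (inj_map val_inj); rewrite val_enum_ord. Qed.

Lemma six_points_normal_form (F : fieldType) (P : 'I_6 -> F) (r l : F) :
  2 != 0 :> F -> degeneracy P != 0 ->
  r ^+ 2 = inv_disc P ->
  let w q := inv_c P * q - inv_a P + r in
  let u q := inv_c P * q - inv_a P - r in
  l ^+ 2 = w (P (ord6 4)) * w (P (ord6 5)) / (u (P (ord6 4)) * u (P (ord6 5))) ->
  exists (a b c d : F), a * d - b * c != 0 /\
    (forall i, c * P i + d != 0) /\
    exists (x1 x2 v : F), v != 0 /\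
      [seq moebius a b c d (P i) | i <- enum 'I_6] =i [:: x1; - x1; x2; - x2; v; v^-1].
Proof.
move=> two_neq0 hdeg r_sqrt w u hl.
have [/andP[hc hdisc] hfix] : (inv_c P != 0) && (inv_disc P != 0) /\
    forall i, fixed_form (P (ord6 0)) (P (ord6 1)) (P (ord6 2)) (P (ord6 3)) (P i) != 0.
  move: hdeg; rewrite /degeneracy !mulf_eq0 !negb_or => /andP[-> /prodf_neq0 hi].
  by split=> // i; apply: hi.
have hr0 : r != 0 by apply: contraNneq hdisc => r0; rewrite -r_sqrt r0 expr0n.
have huw i : (u (P i) != 0) && (w (P i) != 0).
  rewrite -negb_or -mulf_eq0; move: (hfix i); rewrite /u /w.
  by rewrite (fixed_point_factors r_sqrt).
have hu i : u (P i) != 0 by case/andP: (huw i).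
have hw i : w (P i) != 0 by case/andP: (huw i).
have {}hl : l ^+ 2 * (u (P (ord6 4)) * u (P (ord6 5))) = w (P (ord6 4)) * w (P (ord6 5)).
  by rewrite hl divfK ?mulf_neq0.
have /andP[hl0 _] := sqr_scale_neq0 hl (mulf_neq0 (hw _) (hw _)).
pose N := normalizer (inv_a P) (inv_c P) r l.
have N_moebius i : N (P i) = moebius (l * inv_c P) (- (l * (inv_a P + r))) (inv_c P) (r - inv_a P) (P i).
  exact: normalizer_moebius.
have N01 : N (P (ord6 1)) = - N (P (ord6 0)).
  by apply: (normalizer_opposite l r_sqrt); [exact: invol_swaps01 | exact: hw | exact: hw].
have N23 : N (P (ord6 3)) = - N (P (ord6 2)).
  by apply: (normalizer_opposite l r_sqrt); [exact: invol_swaps23 | exact: hw | exact: hw].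
have N45 : N (P (ord6 5)) = (N (P (ord6 4)))^-1 by apply: scaled_inverse_pair hl _ _.
exists (l * inv_c P), (- (l * (inv_a P + r))), (inv_c P), (r - inv_a P); split.
  have -> : l * inv_c P * (r - inv_a P) - - (l * (inv_a P + r)) * inv_c P
      = 2 * (l * inv_c P * r) by ring.
  by rewrite !mulf_neq0.
split.
  by move=> i; have := hw i; rewrite /w; congr (_ != 0); ring.
exists (N (P (ord6 0))), (N (P (ord6 2))), (N (P (ord6 4))); split.
  rewrite /N /normalizer mulf_neq0 ?invr_eq0 ?mulf_neq0 //; [exact: hu | exact: hw].
by rewrite enum_ord6 /= -!N_moebius N01 N23 N45.
Qed.

Lemma closed_six_points_normal_form (k : closedFieldType) (P : 'I_6 -> k) :
  [pchar k] =i pred0 -> degeneracy P != 0 ->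
  exists (a b c d : k), a * d - b * c != 0 /\
    (forall i, c * P i + d != 0) /\
    exists (x1 x2 v : k), v != 0 /\
      [seq moebius a b c d (P i) | i <- enum 'I_6] =i [:: x1; - x1; x2; - x2; v; v^-1].
Proof.
move=> /pcharf0P pchar0 hdeg.
have [r r_sqrt] := closed_field_sqrt (inv_disc P).
pose w q := inv_c P * q - inv_a P + r; pose u q := inv_c P * q - inv_a P - r.
have [l l_sqrt] := closed_field_sqrt (w (P (ord6 4)) * w (P (ord6 5)) / (u (P (ord6 4)) * u (P (ord6 5)))).
by apply: (@six_points_normal_form k P r l); rewrite ?pchar0.
Qed.

Section PolynomialExpressions.
Variables (R : pzRingType) (n : nat).

Definition psub (e1 e2 : pexpr R n) : pexpr R n := PAdd e1 (PMul (@PC R n (-1)) e2).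
Definition psqr (e : pexpr R n) : pexpr R n := PMul e e.
Definition pprod (s : seq (pexpr R n)) : pexpr R n := foldr (@PMul R n) (@PC R n 1) s.

Lemma peval_pprod (s : seq (pexpr R n)) (x : 'I_n -> R) :
  peval (pprod s) x = \prod_(e <- s) peval e x.
Proof. by elim: s => [|e s IHs]; rewrite ?big_nil ?big_cons //= IHs. Qed.

End PolynomialExpressions.
Arguments psub {R n}. Arguments psqr {R n}. Arguments pprod {R n}.

Section DegeneracyPolynomial.
Variable R : comPzRingType.
Local Notation X j := (@PX R 6 (ord6 j)).

Definition pinvol_a : pexpr R 6 := psub (PMul (X 0) (X 1)) (PMul (X 2) (X 3)).
Definition pinvol_b : pexpr R 6 :=
  psub (PMul (PMul (X 2) (X 3)) (PAdd (X 0) (X 1))) (PMul (PMul (X 0) (X 1)) (PAdd (X 2) (X 3))).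
Definition pinvol_c : pexpr R 6 := psub (PAdd (X 0) (X 1)) (PAdd (X 2) (X 3)).
Definition pinvol_disc : pexpr R 6 := PAdd (psqr pinvol_a) (PMul pinvol_b pinvol_c).
Definition pfixed_form (e : pexpr R 6) : pexpr R 6 :=
  psub (psqr (psub (PMul pinvol_c e) pinvol_a)) pinvol_disc.
Definition degeneracy_poly : pexpr R 6 :=
  PMul (PMul pinvol_c pinvol_disc) (pprod [seq pfixed_form (@PX R 6 i) | i <- enum 'I_6]).

Lemma peval_degeneracy (P : 'I_6 -> R) : peval degeneracy_poly P = degeneracy P.
Proof.
rewrite /= peval_pprod big_map big_enum /= !mulN1r -!expr2.
by congr (_ * _); apply: eq_big => // i _; rewrite /= !mulN1r -!expr2.
Qed.

End DegeneracyPolynomial.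

Lemma degeneracy_at_iota (F : fieldType) :
  [pchar F] =i pred0 -> degeneracy (fun i : 'I_6 => (Posz i)%:~R : F) != 0.
Proof.
move=> pchar0.
have -> : degeneracy (fun i : 'I_6 => (Posz i)%:~R : F) = (degeneracy (fun i : 'I_6 => Posz i))%:~R.
  exact: esym (degeneracy_rmorph (GRing.RMorphism.clone int F intr _) _).
rewrite pchar0_intr_eq0 //; apply: mulf_neq0; first by apply: mulf_neq0; vm_compute.
by apply/prodf_neq0 => -[[|[|[|[|[|[|//]]]]]] ?] _; vm_compute.
Qed.

Theorem mainTheorem6 (k : closedFieldType) (hchar : [pchar k] =i pred0) :
  generic (fun P : 'I_6 -> k =>
    exists (a b c d : k), a * d - b * c != 0 /\
      (forall i, c * P i + d != 0) /\
      exists (x1 x2 v : k), v != 0 /\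
        [seq moebius a b c d (P i) | i <- enum 'I_6]
          =i [:: x1; - x1; x2; - x2; v; v^-1]).
Proof.
exists (degeneracy_poly k); split.
  by exists (fun i : 'I_6 => (Posz i)%:~R); rewrite peval_degeneracy degeneracy_at_iota.
by move=> P; rewrite peval_degeneracy; apply: closed_six_points_normal_form.
Qed.
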